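(* Consider the online resource allocation model described in the context, with unknown expected rewards $r_1>r_2$ and adversarial arrivals, and let $\alpha=r_2/r_1$. In each of the following two scenarios, the competitive ratio of any deterministic or randomized algorithm is at most $1/(2-\alpha)$: (Scenario 1) the sampling probability is $p=0$, so no sample information is available; (Scenario 2) sample information is available but the sampling probability $p\in(0,1)$ is completely unknown to the decision-maker.
   Context: Model: a decision-maker has $m$ units of a divisible resource to allocate to unit-demand agents of two types; an accepted type-$i$ agent ($i\in\{1,2\}$) yields a reward in $\{0,1\}$ with mean $r_i\in(0,1)$, $r_1>r_2$, unknown to the decision-maker. An adversary chooses integers $h,\ell\ge0$. Each of the $h+\ell$ agents is independently sampled with probability $p$; $s_1\sim\mathrm{Bin}(h,p)$, $s_2\sim\mathrm{Bin}(\ell,p)$ are the sampled counts, and sampled agents reveal their realized rewards; $\psi$ is this sample information. The remaining $n_1=h-s_1$ type 1 and $n_2=\ell-s_2$ type 2 agents arrive online in an adversarial order $I$; on each arrival the type is observed and the decision-maker irrevocably accepts (possibly fractionally) or rejects, total allocation at most $m$. $\mathrm{OPT}(I)=r_1\min\{n_1,m\}+r_2\min\{n_2,(m-n_1)^+\}$. The competitive ratio of an algorithm $A$ is $\inf_{(h,\ell)}\mathbb E_\psi[\inf_I\mathbb E[\mathrm{REW}_A(I,\psi)]/\mathrm{OPT}(I)]$ (in Scenario 2 the worst case is also over the unknown $p$), where $\mathrm{REW}_A$ is its cumulative expected reward. *)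

From HB Require Import structures.
From mathcomp Require Import all_boot all_order all_algebra.
From mathcomp Require Import all_classical all_reals all_analysis.

Set Implicit Arguments.
Unset Strict Implicit.
Unset Printing Implicit Defensive.

Import Order.TTheory GRing.Theory Num.Theory.
Local Open Scope classical_set_scope.
Local Open Scope ring_scope.

(* Agent types are encoded as booleans: [true] = type 1, [false] = type 2.  *)

(* Sample information psi: the realized rewards (in {0,1}, encoded as bool)
   of the sampled type-1 agents and of the sampled type-2 agents.  Their
   lengths are s1 and s2. *)
Definition sample_info := (seq bool * seq bool)%type.

(* A (possibly randomized) online algorithm: given a random seed [w] drawn
   from a probability space, the sample information, the types of the agents
   that have arrived so far (in order) and the type of the current arrival,
   it returns the (fractional) amount allocated to the current agent.  It
   knows neither r1, r2, p, h, l nor the future arrivals. *)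
Definition algo (Omega : Type) (R : realType) :=
  Omega -> sample_info -> seq bool -> bool -> R.

Section Model.
Context {R : realType}.

Definition mean_reward (r1 r2 : R) (b : bool) : R := if b then r1 else r2.

Definition alloc {Omega : Type} (A : algo Omega R) (w : Omega)
  (psi : sample_info) (I : seq bool) (t : nat) : R :=
  A w psi (take t I) (nth true I t).

Definition feasible_alg {Omega : Type} (m : nat) (A : algo Omega R) : Prop :=
  forall w psi I,
    (forall t, (t < size I)%N -> 0 <= alloc A w psi I t <= 1) /\
    \sum_(t < size I) alloc A w psi I t <= m%:R.

Definition measurable_alg {d} {Omega : measurableType d} (A : algo Omega R)
  : Prop :=
  forall psi pre cur, measurable_fun setT (fun w => A w psi pre cur).

(* cumulative expected reward (expectation over reward realizations) *)
Definition REW {Omega : Type} (r1 r2 : R) (A : algo Omega R) (w : Omega)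
  (psi : sample_info) (I : seq bool) : R :=
  \sum_(t < size I) mean_reward r1 r2 (nth true I t) * alloc A w psi I t.

Definition exp_REW {d} {Omega : measurableType d} (P : probability Omega R)
  (r1 r2 : R) (A : algo Omega R) (psi : sample_info) (I : seq bool) : R :=
  fine (\int[P]_w (REW r1 r2 A w psi I)%:E)%E.

Definition OPT (m : nat) (r1 r2 : R) (n1 n2 : nat) : R :=
  r1 * (minn n1 m)%:R + r2 * (minn n2 (m - n1))%:R.

Definition arrivals (n1 n2 : nat) : set (seq bool) :=
  [set I | count_mem true I = n1 /\ count_mem false I = n2].

(* ratio REW/OPT, with the convention 0/0 = 1 (when OPT = 0 nothing can be
   earned) *)
Definition ratio {d} {Omega : measurableType d} (P : probability Omega R)
  (m : nat) (r1 r2 : R) (A : algo Omega R) (psi : sample_info)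
  (I : seq bool) : R :=
  let o := OPT m r1 r2 (count_mem true I) (count_mem false I) in
  if o == 0 then 1 else exp_REW P r1 r2 A psi I / o.

Definition worst_order {d} {Omega : measurableType d}
  (P : probability Omega R) (m : nat) (r1 r2 : R) (A : algo Omega R)
  (psi : sample_info) (n1 n2 : nat) : R :=
  inf [set ratio P m r1 r2 A psi I | I in arrivals n1 n2].

Definition samp_prob (p : R) (h s : nat) : R :=
  'C(h, s)%:R * p ^+ s * (1 - p) ^+ (h - s).

Definition seq_prob (q : R) (b : seq bool) : R :=
  \prod_(x <- b) (if x then q else 1 - q).

Definition exp_over_samples {d} {Omega : measurableType d}
  (P : probability Omega R) (m : nat) (r1 r2 : R) (A : algo Omega R)
  (p : R) (h l : nat) : R :=
  \sum_(s1 < h.+1) \sum_(b1 : s1.-tuple bool)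
  \sum_(s2 < l.+1) \sum_(b2 : s2.-tuple bool)
    samp_prob p h s1 * seq_prob r1 b1 * (samp_prob p l s2 * seq_prob r2 b2) *
    worst_order P m r1 r2 A (tval b1, tval b2) (h - s1) (l - s2).

Definition comp_ratio {d} {Omega : measurableType d}
  (P : probability Omega R) (m : nat) (r1 r2 : R) (A : algo Omega R)
  (p : R) : R :=
  inf [set exp_over_samples P m r1 r2 A p hl.1 hl.2 | hl in [set: nat * nat]].

Definition comp_ratio_unknown_p {d} {Omega : measurableType d}
  (P : probability Omega R) (m : nat) (r1 r2 : R) (A : algo Omega R) : R :=
  inf [set comp_ratio P m r1 r2 A p | p in [set p : R | 0 < p < 1]].

End Model.

From Pilot Require Import Defs.
From HB Require Import structures.
From mathcomp Require Import all_boot all_order all_algebra.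
From mathcomp Require Import all_classical all_reals all_analysis.
From mathcomp Require Import measurable_realfun ring lra.
Import Order.TTheory GRing.Theory Num.Theory.
Local Open Scope ring_scope.

(* Without sample information an algorithm cannot tell m type-2 agents from m
   type-2 agents followed by m type-1 agents.  Every unit it gives to a type-2
   agent is lost for the type-1 agents, so its expected rewards x on the first
   order and y on the second satisfy y + (r1 - r2) / r2 * x <= r1 m; with the
   optima r2 m and r1 m this forces one of the two ratios below
   r1 / (2 r1 - r2) = 1 / (2 - alpha).  For p = 0 there is never a sample.  For
   an unknown p the adversary keeps the same m or 2m agents and lets p tend to
   0: nobody is sampled with probability (1 - p)^(h + l) >= 1 - (h + l) p, and
   every ratio is at most r1 m / r2. *)

Lemma convex_sum_le_bound (R : realFieldType) (I : finType) (i0 : I)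
    (w v : I -> R) (C : R) :
  (forall i, 0 <= w i) -> \sum_i w i = 1 -> (forall i, v i <= C) ->
  \sum_i w i * v i <= w i0 * v i0 + (1 - w i0) * C.
Proof.
move=> w0 w1 vC.
have -> : 1 - w i0 = \sum_(i | i != i0) w i.
  by rewrite -w1 (bigD1 i0) //= addrC addrK.
rewrite (bigD1 i0) //= lerD2l mulr_suml.
by apply: ler_sum => i _; rewrite ler_wpM2l.
Qed.

Lemma trade_off_min_le (R : realFieldType) (r1 r2 a b : R) : 0 <= r2 < r1 ->
  (r1 - r2) * a + r1 * b <= r1 ->
  a <= 1 / (2 - r2 / r1) \/ b <= 1 / (2 - r2 / r1).
Proof.
case/andP=> r20 r21 ab; have r10 : 0 < r1 by lra.
have -> : 1 / (2 - r2 / r1) = r1 / (2 * r1 - r2).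
  by field; rewrite !gt_eqF //; lra.
have D : 0 < 2 * r1 - r2 by lra.
by have [a_le_b|b_lt_a] := lerP a b; [left | right]; rewrite ler_pdivlMr //; nra.
Qed.

Section Inf.
Variable R : realType.
Implicit Types S : set R.

Lemma ge0_inf_le S x : (forall y, S y -> 0 <= y) -> S x -> inf S <= x.
Proof. by move=> S0; apply: ge_inf; exists 0 => y /S0. Qed.

Lemma inf_ge0 S : (forall y, S y -> 0 <= y) -> 0 <= inf S.
Proof.
move=> S0; have [->|/set0P S_neq0] := eqVneq S set0; first by rewrite inf0.
by apply: lb_le_inf => // y /S0.
Qed.

Lemma inf_le_of_linear_bound (f : R -> R) (c K : R) : 0 <= K ->
  (forall p, 0 < p < 1 -> 0 <= f p) ->
  (forall p, 0 < p < 1 -> f p <= c + K * p) ->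
  inf [set f p | p in [set p | 0 < p < 1]] <= c.
Proof.
move=> K0 f0 fle; apply/ler_addgt0Pr => e e0.
pose p := e / (K + e + 1); have Ke1 : 0 < K + e + 1 by lra.
have p01 : 0 < p < 1 by rewrite divr_gt0 //= ltr_pdivrMr // mul1r; lra.
have Kp : K * p <= e by rewrite /p mulrA ler_pdivrMr //; nra.
apply: (@le_trans _ _ (f p)).
  by apply: ge0_inf_le; [move=> _ [q q01 <-]; exact: f0 | exists p].
by apply: le_trans (fle p p01) _; rewrite lerD2l.
Qed.

End Inf.

Section Expectation.
Context {R : realType} {d : measure_display} {Omega : measurableType d}
  (P : probability Omega R).

Lemma integrable_bounded (f : Omega -> R) (c : R) :
  measurable_fun setT f -> (forall w, 0 <= f w <= c) ->
  P.-integrable setT (EFin \o f).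
Proof.
move=> mf f0c; apply: measurable_bounded_integrable => //.
  exact: (le_lt_trans (probability_le1 P measurableT) (ltry _)).
exists c; split; first exact: num_real.
move=> M cM w _ /=; have /andP[f0 fc] := f0c w.
by rewrite ger0_norm // ltW // (le_lt_trans fc).
Qed.

Lemma Rintegral_le_bound (f : Omega -> R) (c : R) :
  P.-integrable setT (EFin \o f) -> (forall w, f w <= c) ->
  \int[P]_w f w <= c.
Proof.
move=> intf fc; rewrite -[leRHS]mulr1 -[1]/(fine 1%E) -(probability_setT P).
rewrite -Rintegral_cst //; apply: le_Rintegral => //.
exact: finite_measure_integrable_cst.
Qed.

End Expectation.

Section Weights.
Context {R : realType}.
Implicit Types (p q : R) (h n : nat).

Lemma sum_tuple_prod (T : finType) n (f : T -> R) :
  \sum_(t : n.-tuple T) \prod_(x <- t) f x = (\sum_x f x) ^+ n.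
Proof.
under eq_bigr do rewrite big_tuple.
rewrite (reindex (@tuple_of_finfun T n)); last first.
  by exists (@finfun_of_tuple T n) => x _;
    [rewrite tuple_of_finfunK | rewrite finfun_of_tupleK].
under eq_bigr do under eq_bigr do rewrite tnth_mktuple.
rewrite -(bigA_distr_bigA (fun (i : 'I_n) (x : T) => f x)).
by rewrite prodr_const card_ord.
Qed.

Lemma sum_seq_prob q n : \sum_(b : n.-tuple bool) seq_prob q b = 1.
Proof. by rewrite /seq_prob sum_tuple_prod big_bool /= subrKC expr1n. Qed.

Lemma sum_samp_prob p h : \sum_(s < h.+1) samp_prob p h s = 1.
Proof.
rewrite -[RHS](expr1n _ h) -[1 in RHS](subrK p) exprDn.
by apply: eq_bigr => s _; rewrite /samp_prob -mulr_natl; ring.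
Qed.

Lemma samp_prob_ge0 p h s : 0 <= p <= 1 -> 0 <= samp_prob p h s.
Proof. by case/andP=> p0 p1; rewrite !mulr_ge0 ?exprn_ge0 ?subr_ge0. Qed.

Lemma seq_prob_ge0 q b : 0 <= q <= 1 -> 0 <= seq_prob q b.
Proof. by case/andP=> q0 q1; apply: prodr_ge0 => -[] _; rewrite ?subr_ge0. Qed.

Lemma one_sub_expr_le p n : 0 <= p <= 1 -> 1 - (1 - p) ^+ n <= n%:R * p.
Proof.
case/andP=> p0 p1; elim: n => [|n IHn]; first by rewrite expr0 subrr mul0r.
have q1 : (1 - p) ^+ n <= 1 by apply: exprn_ile1; lra.
rewrite exprS -natr1; nra.
Qed.

(* What psi records about h agents of one type: how many were sampled and
   their realized rewards. *)
Definition sample_outcome h := {s : 'I_h.+1 & s.-tuple bool}.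

Definition no_sample h : sample_outcome h := existT _ ord0 [tuple].

Definition sample_weight (p q : R) {h} (x : sample_outcome h) : R :=
  samp_prob p h (tag x) * seq_prob q (tagged x).

Lemma sample_weight_ge0 p q h (x : sample_outcome h) :
  0 <= p <= 1 -> 0 <= q <= 1 -> 0 <= sample_weight p q x.
Proof. by move=> p01 q01; rewrite mulr_ge0 ?samp_prob_ge0 ?seq_prob_ge0. Qed.

Lemma sum_sample_weight p q h :
  \sum_(x : sample_outcome h) sample_weight p q x = 1.
Proof.
transitivity
  (\sum_(s < h.+1) \sum_(b : s.-tuple bool) samp_prob p h s * seq_prob q b).
  by rewrite sig_big_dep.
under eq_bigr do rewrite -mulr_sumr sum_seq_prob mulr1.
exact: sum_samp_prob.
Qed.

Lemma sample_weight_none p q h : sample_weight p q (no_sample h) = (1 - p) ^+ h.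
Proof.
rewrite /sample_weight /samp_prob /seq_prob big_nil bin0 expr0 subn0.
by rewrite !mul1r mulr1.
Qed.

End Weights.

Section SampleAverage.
Context {R : realType} {d : measure_display} {Omega : measurableType d}
  {P : probability Omega R} {m : nat} {r1 r2 : R} {A : algo Omega R}.
Hypotheses (r1_01 : 0 <= r1 <= 1) (r2_01 : 0 <= r2 <= 1).
Implicit Types (p C : R) (h l : nat).

Lemma exp_over_samplesE p h l :
  exp_over_samples P m r1 r2 A p h l =
  \sum_(xy : sample_outcome h * sample_outcome l)
    sample_weight p r1 xy.1 * sample_weight p r2 xy.2 *
    worst_order P m r1 r2 A (tval (tagged xy.1), tval (tagged xy.2))
      (h - tag xy.1)%N (l - tag xy.2)%N.
Proof.
rewrite /exp_over_samples sig_big_dep.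
under eq_bigr do rewrite sig_big_dep.
by rewrite pair_bigA.
Qed.

Lemma exp_over_samples_ge0 p h l : 0 <= p <= 1 ->
  (forall psi n1 n2, 0 <= worst_order P m r1 r2 A psi n1 n2) ->
  0 <= exp_over_samples P m r1 r2 A p h l.
Proof.
move=> p01 worst0; rewrite exp_over_samplesE; apply: sumr_ge0 => xy _.
by rewrite mulr_ge0 ?worst0 // mulr_ge0 ?sample_weight_ge0.
Qed.

Lemma exp_over_samples_le C p h l : 0 <= p <= 1 -> 0 <= C ->
  (forall psi n1 n2, 0 <= worst_order P m r1 r2 A psi n1 n2 <= C) ->
  exp_over_samples P m r1 r2 A p h l <=
  worst_order P m r1 r2 A ([::], [::]) h l + (h + l)%:R * C * p.
Proof.
move=> p01 C0 worstC; set W := worst_order P m r1 r2 A ([::], [::]) h l.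
have /andP[W0 WC] : 0 <= W <= C by exact: worstC.
pose wt (xy : sample_outcome h * sample_outcome l) :=
  sample_weight p r1 xy.1 * sample_weight p r2 xy.2.
pose v (xy : sample_outcome h * sample_outcome l) :=
  worst_order P m r1 r2 A (tval (tagged xy.1), tval (tagged xy.2))
    (h - tag xy.1)%N (l - tag xy.2)%N.
rewrite exp_over_samplesE -/(\sum_xy wt xy * v xy).
apply: le_trans
  (@convex_sum_le_bound _ _ (no_sample h, no_sample l) wt v C _ _ _) _ => /=.
- by move=> xy; rewrite mulr_ge0 ?sample_weight_ge0.
- rewrite -(pair_bigA _ (fun x y => sample_weight p r1 x * sample_weight p r2 y)).
  under eq_bigr do rewrite -mulr_sumr sum_sample_weight mulr1.
  exact: sum_sample_weight.
- by move=> xy; have /andP[] := worstC (tval (tagged xy.1), tval (tagged xy.2))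
    (h - tag xy.1)%N (l - tag xy.2)%N.
rewrite /wt /v /= !sample_weight_none -exprD !subn0 -/W.
have /andP[p0 p1] := p01.
have q0 : 0 <= (1 - p) ^+ (h + l) by rewrite exprn_ge0 // subr_ge0.
have q1 : (1 - p) ^+ (h + l) <= 1.
  by rewrite exprn_ile1 // ?subr_ge0 // lerBlDr lerDl.
have := one_sub_expr_le p (h + l) p01.
nra.
Qed.

End SampleAverage.

Section Online.
Context {R : realType} {m : nat} {d : measure_display}
  {Omega : measurableType d} {A : algo Omega R}.
Implicit Types (w : Omega) (psi : sample_info) (I J : seq bool).

Lemma alloc_cat w psi I J t :
  (t < size I)%N -> alloc A w psi (I ++ J) t = alloc A w psi I t.
Proof. by move=> tI; rewrite /alloc take_cat nth_cat tI. Qed.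

Lemma REW_cat r1 r2 w psi I J :
  REW r1 r2 A w psi (I ++ J) = REW r1 r2 A w psi I +
  \sum_(t < size J) mean_reward r1 r2 (nth true J t) *
    alloc A w psi (I ++ J) (size I + t)%N.
Proof.
rewrite /REW size_cat big_split_ord /=; congr (_ + _); apply: eq_bigr => t _.
  by rewrite nth_cat ltn_ord alloc_cat.
by rewrite nth_cat ltnNge leq_addr /= addKn.
Qed.

Lemma sum_nseq_mean_reward r1 r2 n b (F : 'I_(size (nseq n b)) -> R) :
  \sum_(t : 'I_(size (nseq n b)))
    mean_reward r1 r2 (nth true (nseq n b) t) * F t =
  mean_reward r1 r2 b * \sum_t F t.
Proof.
rewrite mulr_sumr; apply: eq_bigr => t _.
have tn : (t < n)%N by rewrite -[n in (_ < n)%N](size_nseq n b).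
by rewrite nth_nseq tn.
Qed.

Hypothesis feasA : feasible_alg m A.

Lemma REW_ge0 r1 r2 w psi I : 0 <= r2 <= r1 -> 0 <= REW r1 r2 A w psi I.
Proof.
case/andP=> r20 r21; have [alloc01 _] := feasA w psi I.
apply: sumr_ge0 => t _; have /andP[a0 _] := alloc01 t (ltn_ord t).
by rewrite mulr_ge0 // /mean_reward; case: ifP => _; lra.
Qed.

Lemma REW_le r1 r2 w psi I :
  0 <= r2 <= r1 -> REW r1 r2 A w psi I <= r1 * m%:R.
Proof.
case/andP=> r20 r21; have [alloc01 allocm] := feasA w psi I.
apply: le_trans (_ : _ <= r1 * \sum_(t < size I) alloc A w psi I t) _.
  rewrite mulr_sumr; apply: ler_sum => t _.
  have /andP[a0 _] := alloc01 t (ltn_ord t).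
  by rewrite ler_wpM2r // /mean_reward; case: ifP => _; lra.
by rewrite ler_wpM2l //; lra.
Qed.

Lemma REW_trade_off r1 r2 w psi n k : 0 < r2 <= r1 ->
  REW r1 r2 A w psi (nseq n false ++ nseq k true) +
  (r1 - r2) / r2 * REW r1 r2 A w psi (nseq n false) <= r1 * m%:R.
Proof.
case/andP=> r20 r21; pose I := nseq n false; pose J := nseq k true.
pose S1 := \sum_(t < size I) alloc A w psi I t.
pose S2 := \sum_(t < size J) alloc A w psi (I ++ J) (size I + t)%N.
have REW_I a b : REW a b A w psi I = b * S1.
  by rewrite /REW /I sum_nseq_mean_reward.
have REW_IJ a b : REW a b A w psi (I ++ J) = b * S1 + a * S2.
  by rewrite REW_cat REW_I /J sum_nseq_mean_reward.
have S12 : S1 + S2 <= m%:R.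
  have [_ allocm] := feasA w psi (I ++ J).
  have -> : S1 + S2 = REW 1 1 A w psi (I ++ J) by rewrite REW_IJ !mul1r.
  apply: le_trans allocm; rewrite /REW.
  by under eq_bigr do rewrite /mean_reward if_same mul1r.
rewrite REW_IJ REW_I.
have -> : r2 * S1 + r1 * S2 + (r1 - r2) / r2 * (r2 * S1) = r1 * (S1 + S2).
  by field; rewrite gt_eqF.
by rewrite ler_wpM2l //; lra.
Qed.

End Online.

Section LowerBound.
Context {R : realType} {m : nat} {d : measure_display}
  {Omega : measurableType d} (P : probability Omega R) {A : algo Omega R}.
Hypotheses (m_gt0 : (0 < m)%N) (feasA : feasible_alg m A).
Hypothesis measA : measurable_alg A.
Context {r1 r2 : R}.
Hypotheses (r2_gt0 : 0 < r2) (r2_lt_r1 : r2 < r1).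
Implicit Types (psi : sample_info) (I : seq bool).

Lemma REW_bounds w psi I : 0 <= REW r1 r2 A w psi I <= r1 * m%:R.
Proof.
have r2_r1 : 0 <= r2 <= r1 by rewrite !ltW.
by rewrite (REW_ge0 feasA) ?(REW_le feasA).
Qed.

Lemma exp_REWE psi I :
  exp_REW P r1 r2 A psi I = \int[P]_w REW r1 r2 A w psi I.
Proof. by []. Qed.

Lemma measurable_REW psi I :
  measurable_fun setT (fun w => REW r1 r2 A w psi I).
Proof.
by apply: measurable_sum => t; apply: measurable_funM => //; exact: measA.
Qed.

Lemma integrable_REW psi I :
  P.-integrable setT (EFin \o (fun w => REW r1 r2 A w psi I)).
Proof.
apply: (integrable_bounded P _ (r1 * m%:R)); first exact: measurable_REW.
by move=> w; exact: REW_bounds.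
Qed.

Lemma exp_REW_ge0 psi I : 0 <= exp_REW P r1 r2 A psi I.
Proof.
rewrite exp_REWE; apply: Rintegral_ge0 => w _.
by case/andP: (REW_bounds w psi I).
Qed.

Lemma exp_REW_le psi I : exp_REW P r1 r2 A psi I <= r1 * m%:R.
Proof.
rewrite exp_REWE; apply: (Rintegral_le_bound P) => [|w].
  exact: integrable_REW.
by case/andP: (REW_bounds w psi I).
Qed.

Lemma exp_REW_trade_off psi n k :
  exp_REW P r1 r2 A psi (nseq n false ++ nseq k true) +
  (r1 - r2) / r2 * exp_REW P r1 r2 A psi (nseq n false) <= r1 * m%:R.
Proof.
set I1 := nseq n false; set I2 := I1 ++ nseq k true.
have trade_off w :
    REW r1 r2 A w psi I2 + (r1 - r2) / r2 * REW r1 r2 A w psi I1 <= r1 * m%:R.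
  by rewrite (REW_trade_off feasA) // r2_gt0 ltW.
pose c := (r1 - r2) / r2; have c0 : 0 <= c by rewrite divr_ge0 ?subr_ge0 ?ltW.
have measurable_cREW :
    measurable_fun setT (fun w => c * REW r1 r2 A w psi I1).
  by apply: measurable_funM; [exact: measurable_cst | exact: measurable_REW].
have cREW_bounds w : 0 <= c * REW r1 r2 A w psi I1 <= c * (r1 * m%:R).
  by have /andP[? ?] := REW_bounds w psi I1; rewrite mulr_ge0 // ler_wpM2l.
have integrable_cREW := integrable_bounded P _ _ measurable_cREW cREW_bounds.
rewrite !exp_REWE -RintegralZl ?integrable_REW // -RintegralD ?integrable_REW //.
apply: (Rintegral_le_bound P) => [|w]; last exact: trade_off.
apply: (integrable_bounded P _ (r1 * m%:R)).
  by apply: measurable_funD => //; exact: measurable_REW.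
move=> w /=; rewrite trade_off andbT addr_ge0 //.
  by case/andP: (REW_bounds w psi I2).
by case/andP: (cREW_bounds w).
Qed.

Lemma OPT_ge0 n1 n2 : 0 <= OPT m r1 r2 n1 n2.
Proof. by rewrite addr_ge0 // mulr_ge0 // ltW // (lt_trans r2_gt0). Qed.

Lemma OPT_neq0_ge n1 n2 : OPT m r1 r2 n1 n2 != 0 -> r2 <= OPT m r1 r2 n1 n2.
Proof.
have r2_le_r1x x : r2 <= r1 * x.+1%:R.
  rewrite (le_trans (ltW r2_lt_r1)) // ler_peMr ?ler1n //.
  by rewrite ltW // (lt_trans r2_gt0).
rewrite /OPT; move: (minn n1 m) (minn n2 (m - n1)) => [|a] [|b];
  rewrite ?mulr0 ?addr0 ?add0r ?eqxx // => _.
- by rewrite ler_peMr ?ler1n // ltW.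
- by rewrite -[leLHS]addr0 lerD // mulr_ge0 // ltW.
Qed.

Lemma ratio_ge0 psi I : 0 <= Defs.ratio P m r1 r2 A psi I.
Proof.
rewrite /Defs.ratio /=; case: ifP => // _.
by rewrite divr_ge0 ?exp_REW_ge0 ?OPT_ge0.
Qed.

Lemma ratio_le psi I : Defs.ratio P m r1 r2 A psi I <= r1 * m%:R / r2.
Proof.
rewrite /Defs.ratio /=; case: ifPn => [_ | /OPT_neq0_ge OPT_ge].
  rewrite ler_pdivlMr // mul1r (le_trans (ltW r2_lt_r1)) //.
  by rewrite ler_peMr ?ler1n // ltW // (lt_trans r2_gt0).
apply: ler_pM; rewrite ?exp_REW_ge0 ?exp_REW_le ?invr_ge0 ?OPT_ge0 //.
by rewrite lef_pV2 ?posrE // (lt_le_trans r2_gt0).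
Qed.

Lemma worst_order_le_ratio psi n1 n2 I : arrivals n1 n2 I ->
  worst_order P m r1 r2 A psi n1 n2 <= Defs.ratio P m r1 r2 A psi I.
Proof.
by move=> arrI; apply: ge0_inf_le => [_ [J _ <-]|]; [exact: ratio_ge0 | exists I].
Qed.

Lemma worst_order_ge0 psi n1 n2 : 0 <= worst_order P m r1 r2 A psi n1 n2.
Proof. by apply: inf_ge0 => _ [I _ <-]; exact: ratio_ge0. Qed.

Lemma worst_order_le psi n1 n2 :
  worst_order P m r1 r2 A psi n1 n2 <= r1 * m%:R / r2.
Proof.
have arr : arrivals n1 n2 (nseq n1 true ++ nseq n2 false).
  by split; rewrite count_cat !count_nseq /= mul1n mul0n ?addn0.
by apply: le_trans (ratio_le psi _); exact: worst_order_le_ratio arr.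
Qed.

Lemma worst_order_two_orders psi :
  worst_order P m r1 r2 A psi 0 m <= 1 / (2 - r2 / r1) \/
  worst_order P m r1 r2 A psi m m <= 1 / (2 - r2 / r1).
Proof.
set I1 := nseq m false; set I2 := I1 ++ nseq m true.
have arr1 : arrivals 0 m I1 by split; rewrite count_nseq /= ?mul0n ?mul1n.
have arr2 : arrivals m m I2.
  by split; rewrite count_cat !count_nseq /= ?mul0n ?mul1n ?addn0.
have m_pos : 0 < (m%:R : R) by rewrite ltr0n.
have r1_gt0 : 0 < r1 by exact: lt_trans r2_gt0 r2_lt_r1.
have ratio1 :
    Defs.ratio P m r1 r2 A psi I1 = exp_REW P r1 r2 A psi I1 / (r2 * m%:R).
  case: arr1 => n1E n2E; rewrite /Defs.ratio n1E n2E /OPT.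
  rewrite min0n mulr0 add0r subn0 minnn.
  by rewrite mulf_eq0 !gt_eqF.
have ratio2 :
    Defs.ratio P m r1 r2 A psi I2 = exp_REW P r1 r2 A psi I2 / (r1 * m%:R).
  case: arr2 => n1E n2E; rewrite /Defs.ratio n1E n2E /OPT.
  rewrite minnn subnn minn0 mulr0 addr0.
  by rewrite mulf_eq0 !gt_eqF.
have := exp_REW_trade_off psi m m; rewrite -/I1 -/I2 => trade_off.
have r2_r1 : 0 <= r2 < r1 by rewrite ltW.
have : (r1 - r2) * Defs.ratio P m r1 r2 A psi I1 +
       r1 * Defs.ratio P m r1 r2 A psi I2 <= r1.
  rewrite ratio1 ratio2.
  set x1 := exp_REW _ _ _ _ _ I1; set x2 := exp_REW _ _ _ _ _ I2.
  have -> : (r1 - r2) * (x1 / (r2 * m%:R)) + r1 * (x2 / (r1 * m%:R)) =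
            (x2 + (r1 - r2) / r2 * x1) / m%:R by field; rewrite !gt_eqF.
  by rewrite ler_pdivrMr.
case/(@trade_off_min_le _ r1 r2 _ _ r2_r1) => [le1 | le2].
  by left; apply: le_trans le1; exact: worst_order_le_ratio.
by right; apply: le_trans le2; exact: worst_order_le_ratio.
Qed.

Lemma ratio_bound_ge0 : 0 <= r1 * m%:R / r2.
Proof.
have r1_gt0 := lt_trans r2_gt0 r2_lt_r1.
by rewrite divr_ge0 ?mulr_ge0 // ltW.
Qed.

Hypothesis r1_lt1 : r1 < 1.

Let r1_01 : 0 <= r1 <= 1.
Proof. by have r1_gt0 := lt_trans r2_gt0 r2_lt_r1; rewrite !ltW. Qed.

Let r2_01 : 0 <= r2 <= 1.
Proof. by have r2_lt1 := lt_trans r2_lt_r1 r1_lt1; rewrite !ltW. Qed.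

Lemma comp_ratio_ge0 p : 0 <= p <= 1 -> 0 <= comp_ratio P m r1 r2 A p.
Proof.
move=> p01; apply: inf_ge0 => _ [hl _ <-].
by apply: (exp_over_samples_ge0 r1_01 r2_01) => // *; exact: worst_order_ge0.
Qed.

Lemma comp_ratio_le p : 0 <= p <= 1 ->
  comp_ratio P m r1 r2 A p <=
  1 / (2 - r2 / r1) + (m + m)%:R * (r1 * m%:R / r2) * p.
Proof.
move=> p01; have /andP[p0 _] := p01.
set c := 1 / (2 - r2 / r1); set K := (m + m)%:R * _.
have worst_bounds psi n1 n2 :
    0 <= worst_order P m r1 r2 A psi n1 n2 <= r1 * m%:R / r2.
  by rewrite worst_order_ge0 worst_order_le.
suff instance_le h l : worst_order P m r1 r2 A ([::], [::]) h l <= c ->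
    (h + l <= m + m)%N -> comp_ratio P m r1 r2 A p <= c + K * p.
  have [W | W] := worst_order_two_orders ([::], [::]).
    by apply: instance_le W _; rewrite add0n leq_addl.
  exact: instance_le W _.
move=> worst_le_c hl_le.
apply: (@le_trans _ _ (exp_over_samples P m r1 r2 A p h l)).
  apply: ge0_inf_le; last by exists (h, l).
  by move=> _ [hl' _ <-]; apply: (exp_over_samples_ge0 r1_01 r2_01) => // *;
    exact: worst_order_ge0.
apply: le_trans (exp_over_samples_le r1_01 r2_01 _ _ _ _ p01 ratio_bound_ge0
  worst_bounds) _.
by rewrite lerD // ler_wpM2r // ler_wpM2r ?ratio_bound_ge0 // ler_nat.
Qed.

End LowerBound.

Theorem proposition1 (R : realType) (m : nat) (d : measure_display)
  (Omega : measurableType d) (P : probability Omega R) (A : algo Omega R) :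
  (0 < m)%N -> feasible_alg m A -> measurable_alg A ->
  forall r1 r2 : R, 0 < r2 -> r2 < r1 -> r1 < 1 ->
    comp_ratio P m r1 r2 A 0 <= 1 / (2 - r2 / r1) /\
    comp_ratio_unknown_p P m r1 r2 A <= 1 / (2 - r2 / r1).
Proof.
move=> m_gt0 feasA measA r1 r2 r2_gt0 r2_lt_r1 r1_lt1.
have comp_le := comp_ratio_le P m_gt0 feasA measA r2_gt0 r2_lt_r1 r1_lt1.
split; first by have := comp_le 0; rewrite mulr0 addr0; apply; rewrite lexx ler01.
apply: (@inf_le_of_linear_bound _ _ _ ((m + m)%:R * (r1 * m%:R / r2))).
- by rewrite mulr_ge0 // ratio_bound_ge0 // ltW.
- by move=> p /andP[p0 p1]; rewrite comp_ratio_ge0 // !ltW.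
- by move=> p /andP[p0 p1]; rewrite comp_le // !ltW.
Qed.
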